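(* Let $\mu$ be a nonzero finite Borel measure on $\mathbb{R}$ with compact support, with moments $y_k=\int x^k d\mu$ and $\mathbf{y}=(y_k)_{k\in\mathbb{N}}$. For $d\in\mathbb{N}$ consider the semidefinite program $$\rho_d=\min_{a,b\in\mathbb{R}}\{\,b-a:\ \mathbf{H}_d(\theta_a\,\mathbf{y})\succeq0,\ \mathbf{H}_d(-\theta_b\,\mathbf{y})\succeq0\,\}.$$ Then (a) this program has an optimal solution $(a_d,b_d)$ for every $d\in\mathbb{N}$; (b) for any sequence $(a_d,b_d)_{d\in\mathbb{N}}$ of optimal solutions, $(a_d,b_d)\to(a^*,b^* )$ as $d\to\infty$ for some real $a^*\le b^*$ with $\mathrm{supp}\,\mu\subseteq[a^*,b^*]$; moreover $[a^*,b^*]$ is the smallest closed interval containing $\mathrm{supp}\,\mu$, and if $\mathrm{supp}\,\mu$ is an interval then $\mathrm{supp}\,\mu=[a^*,b^*]$.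
   Context: For a sequence $\mathbf{y}=(y_k)_{k\in\mathbb{N}}$ and a polynomial $\theta(x)=\sum_{k=0}^s\theta_kx^k$, $\mathbf{H}_d(\theta\,\mathbf{y})$ is the $(d+1)\times(d+1)$ symmetric matrix with entries $\sum_{k=0}^s\theta_k\,y_{i+j+k-2}$, $i,j=1,\ldots,d+1$. For $a\in\mathbb{R}$, $\theta_a(x)=x-a$; thus $\mathbf{H}_d(\theta_a\mathbf{y})(i,j)=y_{i+j-1}-a\,y_{i+j-2}$ and $\mathbf{H}_d(-\theta_b\mathbf{y})(i,j)=b\,y_{i+j-2}-y_{i+j-1}$. $\succeq0$ denotes positive semidefiniteness. $\mathrm{supp}\,\mu$ is the smallest closed set whose complement has $\mu$-measure zero. *)

From Stdlib Require Import Reals Lra.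
Open Scope R_scope.

Fixpoint fsum (f : nat -> R) (n : nat) : R :=
  match n with
  | O => 0
  | S k => fsum f k + f k
  end.

Inductive borel : (R -> Prop) -> Prop :=
| borel_open : forall U, open_set U -> borel U
| borel_compl : forall A, borel A -> borel (fun x => ~ A x)
| borel_union : forall A : nat -> R -> Prop,
    (forall n, borel (A n)) -> borel (fun x => exists n, A n x).

Definition is_finite_borel_measure (mu : (R -> Prop) -> R) : Prop :=
  (forall A, borel A -> 0 <= mu A) /\
  mu (fun _ => False) = 0 /\
  (forall A : nat -> R -> Prop,
      (forall n, borel (A n)) ->
      (forall n m x, n <> m -> A n x -> A m x -> False) ->
      infinite_sum (fun n => mu (A n)) (mu (fun x => exists n, A n x))).

Definition supp (mu : (R -> Prop) -> R) (x : R) : Prop :=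
  forall C : R -> Prop, closed_set C -> mu (fun z => ~ C z) = 0 -> C x.

(* v is the integral of a nonnegative simple function
   sum_{i<n} c_i 1_{A_i} (A_i disjoint Borel) lying below f *)
Definition simple_lower (mu : (R -> Prop) -> R) (f : R -> R) (v : R) : Prop :=
  exists (n : nat) (c : nat -> R) (A : nat -> R -> Prop),
    (forall i, (i < n)%nat -> borel (A i) /\ 0 <= c i) /\
    (forall i j x, (i < n)%nat -> (j < n)%nat -> i <> j -> A i x -> A j x -> False) /\
    (forall i x, (i < n)%nat -> A i x -> c i <= f x) /\
    v = fsum (fun i => c i * mu (A i)) n.

(* Lebesgue integral: int f dmu = int f^+ dmu - int f^- dmu, each the
   supremum of integrals of simple functions below; both assumed finite *)
Definition is_integral (mu : (R -> Prop) -> R) (f : R -> R) (r : R) : Prop :=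
  exists p q : R,
    is_lub (simple_lower mu (fun x => Rmax (f x) 0)) p /\
    is_lub (simple_lower mu (fun x => Rmax (- f x) 0)) q /\
    r = p - q.

Definition is_moment_seq (mu : (R -> Prop) -> R) (y : nat -> R) : Prop :=
  forall k : nat, is_integral mu (fun x => x ^ k) (y k).

(* H_d(theta y)(i,j), 0-indexed i,j in {0..d}; theta = sum_{k<=s} theta_k x^k *)
Definition hankel (d s : nat) (theta : nat -> R) (y : nat -> R) (i j : nat) : R :=
  fsum (fun k => theta k * y (i + j + k)%nat) (S s).

Definition psd (d : nat) (M : nat -> nat -> R) : Prop :=
  forall v : nat -> R,
    0 <= fsum (fun i => fsum (fun j => v i * M i j * v j) (S d)) (S d).

(* coefficients of theta_a(x) = x - a *)
Definition theta (a : R) (k : nat) : R :=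
  match k with O => - a | 1%nat => 1 | _ => 0 end.
(* coefficients of -theta_b(x) = b - x *)
Definition neg_theta (b : R) (k : nat) : R :=
  match k with O => b | 1%nat => -1 | _ => 0 end.

Definition feasible (y : nat -> R) (d : nat) (a b : R) : Prop :=
  psd d (hankel d 1 (theta a) y) /\ psd d (hankel d 1 (neg_theta b) y).

Definition optimal (y : nat -> R) (d : nat) (a b : R) : Prop :=
  feasible y d a b /\ forall a' b', feasible y d a' b' -> b - a <= b' - a'.

Definition is_interval (S : R -> Prop) : Prop :=
  forall x z t, S x -> S z -> x <= t <= z -> S t.

(* Let a* and b* be the least and greatest points of supp mu; they exist because supp mu is
   closed, bounded and nonempty, and mu is carried by K = [a*, b*]. Positive semidefiniteness
   of H_d(theta_a y) and H_d(-theta_b y) says a L(P^2) <= L(t P^2) <= b L(P^2) for every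
   polynomial P of degree <= d, where L is the moment functional t^n |-> y_n. Riemann-Stieltjes
   sums of mu over finer partitions of K converge to L on polynomials, so L is nonnegative on
   polynomials that are nonnegative on K: hence a* and b* are feasible for every d, while
   testing P = 1 shows that every feasible a is <= b* and every feasible b is >= a*. The
   feasible a form a closed half-line (and so do the feasible b), so the optimum exists.
   Finally, for P = (b* - t)^n the weight P^2 concentrates near a* as n grows; since a* lies
   in the support, L((t - a* - eps) P^2) < 0 for n large, so a* + eps is infeasible once
   d >= n. Symmetrically at b*. *)

From Stdlib Require Import Reals Lra Lia Classical FunctionalExtensionality PropExtensionality.
Open Scope R_scope.

Lemma set_ext (A B : R -> Prop) : (forall x, A x <-> B x) -> A = B.
Proof.
  intros H; apply functional_extensionality; intros x.
  apply propositional_extensionality; auto.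
Qed.

Lemma fsum_ext f g n : (forall i, (i < n)%nat -> f i = g i) -> fsum f n = fsum g n.
Proof.
  induction n as [|n IH]; simpl; intros H; auto.
  rewrite IH by (intros; apply H; lia).
  rewrite (H n) by lia; auto.
Qed.

Lemma fsum_plus f g n : fsum (fun i => f i + g i) n = fsum f n + fsum g n.
Proof. induction n; simpl; [lra | rewrite IHn; lra]. Qed.

Lemma fsum_minus f g n : fsum (fun i => f i - g i) n = fsum f n - fsum g n.
Proof. induction n; simpl; [lra | rewrite IHn; lra]. Qed.

Lemma fsum_scal_l c f n : fsum (fun i => c * f i) n = c * fsum f n.
Proof. induction n; simpl; [lra | rewrite IHn; lra]. Qed.

Lemma fsum_scal_r c f n : fsum (fun i => f i * c) n = fsum f n * c.
Proof. induction n; simpl; [lra | rewrite IHn; lra]. Qed.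

Lemma fsum_le f g n : (forall i, (i < n)%nat -> f i <= g i) -> fsum f n <= fsum g n.
Proof.
  induction n as [|n IH]; simpl; intros H; [lra|].
  assert (f n <= g n) by (apply H; lia).
  assert (fsum f n <= fsum g n) by (apply IH; intros; apply H; lia).
  lra.
Qed.

Lemma fsum_eq0 f n : (forall i, (i < n)%nat -> f i = 0) -> fsum f n = 0.
Proof.
  intros H; rewrite (fsum_ext f (fun _ => 0)) by auto.
  clear H; induction n; simpl; lra.
Qed.

Lemma fsum_comm (f : nat -> nat -> R) n m :
  fsum (fun i => fsum (fun j => f i j) m) n = fsum (fun j => fsum (fun i => f i j) n) m.
Proof.
  induction n as [|n IH]; simpl.
  - symmetry; apply fsum_eq0; auto.
  - rewrite IH, <- fsum_plus; reflexivity.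
Qed.

Lemma fsum_first f n : fsum f (S n) = f 0%nat + fsum (fun i => f (S i)) n.
Proof. induction n; simpl; [lra|]. simpl in IHn; rewrite IHn; lra. Qed.

Lemma fsum_trunc f n d : (n <= d)%nat -> (forall i, (n < i)%nat -> f i = 0) ->
  fsum f (S d) = fsum f (S n).
Proof.
  intros Hle H; induction Hle as [|m Hle IH]; auto.
  change (fsum f (S (S m))) with (fsum f (S m) + f (S m)).
  rewrite IH, H by lia; lra.
Qed.

Lemma sum_f_R0_fsum f n : sum_f_R0 f n = fsum f (S n).
Proof. induction n; simpl; [lra|]. rewrite IHn; simpl; lra. Qed.

Lemma borel_ext A B : borel A -> (forall x, A x <-> B x) -> borel B.
Proof. intros HA H; rewrite <- (set_ext A B H); auto. Qed.

Lemma borel_True : borel (fun _ => True).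
Proof. apply borel_open; intros x _; exists (mkposreal 1 Rlt_0_1); intros z _; auto. Qed.

Lemma borel_False : borel (fun _ => False).
Proof. apply borel_open; intros x []. Qed.

Lemma borel_or A B : borel A -> borel B -> borel (fun x => A x \/ B x).
Proof.
  intros HA HB.
  set (F := fun n : nat => match n with 0%nat => A | _ => B end).
  apply (borel_ext (fun x => exists n, F n x)).
  - apply borel_union; intros [|n]; simpl; auto.
  - intros x; split.
    + intros [[|n] H]; simpl in H; auto.
    + intros [H|H]; [exists 0%nat | exists 1%nat]; auto.
Qed.

Lemma borel_and A B : borel A -> borel B -> borel (fun x => A x /\ B x).
Proof.
  intros HA HB.
  apply (borel_ext (fun x => ~ ((fun z => ~ A z) x \/ (fun z => ~ B z) x))).
  - apply borel_compl, borel_or; apply borel_compl; auto.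
  - intros x; split; intros H.
    + split; apply NNPP; intro; apply H; auto.
    + intros [?|?]; tauto.
Qed.

Lemma borel_gt c : borel (fun x => c < x).
Proof.
  apply borel_open; intros x Hx.
  assert (Hp : 0 < x - c) by lra.
  exists (mkposreal _ Hp); intros z Hz.
  unfold disc in Hz; simpl in Hz; apply Rabs_def2 in Hz; lra.
Qed.

Lemma borel_lt c : borel (fun x => x < c).
Proof.
  apply borel_open; intros x Hx.
  assert (Hp : 0 < c - x) by lra.
  exists (mkposreal _ Hp); intros z Hz.
  unfold disc in Hz; simpl in Hz; apply Rabs_def2 in Hz; lra.
Qed.

Lemma borel_ge c : borel (fun x => c <= x).
Proof.
  apply (borel_ext (fun x => ~ (x < c))); [apply borel_compl, borel_lt|].
  intros x; split; intros; lra.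
Qed.

Lemma borel_le c : borel (fun x => x <= c).
Proof.
  apply (borel_ext (fun x => ~ (c < x))); [apply borel_compl, borel_gt|].
  intros x; split; intros; lra.
Qed.

Lemma borel_Icc c d : borel (fun x => c <= x <= d).
Proof. apply borel_and; [apply borel_ge | apply borel_le]. Qed.

Lemma borel_Ioo c d : borel (fun x => c < x < d).
Proof. apply borel_and; [apply borel_gt | apply borel_lt]. Qed.

Lemma borel_not_Icc c d : borel (fun x => ~ (c <= x <= d)).
Proof. apply borel_compl, borel_Icc. Qed.

Definition finite_union (F : nat -> R -> Prop) (n : nat) (x : R) : Prop :=
  exists i, (i < n)%nat /\ F i x.

Lemma borel_finite_union F n : (forall i, (i < n)%nat -> borel (F i)) -> borel (finite_union F n).
Proof.
  induction n as [|n IH]; intros H.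
  - apply (borel_ext _ _ borel_False); intros x; split; [tauto|].
    intros [i [Hi _]]; lia.
  - apply (borel_ext (fun x => finite_union F n x \/ F n x)).
    + apply borel_or; [apply IH; intros; apply H|apply H]; lia.
    + intros x; split.
      * intros [[i [Hi Hf]]|Hf]; [exists i | exists n]; split; auto; lia.
      * intros [i [Hi Hf]]; destruct (Nat.eq_dec i n); subst; auto.
        left; exists i; split; auto; lia.
Qed.

Section Measure.
Variable mu : (R -> Prop) -> R.
Hypothesis Hmu : is_finite_borel_measure mu.

Lemma mu_ge0 A : borel A -> 0 <= mu A.
Proof. destruct Hmu as [H _]; auto. Qed.

Lemma mu_eq0_of_empty A : (forall x, ~ A x) -> mu A = 0.
Proof.
  intros H; replace A with (fun _ : R => False); [apply Hmu|].
  apply set_ext; intros x; split; [tauto | apply H].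
Qed.

Lemma mu_disjoint_or A B : borel A -> borel B -> (forall x, A x -> B x -> False) ->
  mu (fun x => A x \/ B x) = mu A + mu B.
Proof.
  intros HA HB Hdisj; destruct Hmu as [_ [Hemp Hadd]].
  set (F := fun n : nat => match n with 0%nat => A | 1%nat => B | _ => fun _ : R => False end).
  assert (HF : forall n, borel (F n)) by (intros [|[|n]]; simpl; auto using borel_False).
  assert (Hd : forall n m x, n <> m -> F n x -> F m x -> False).
  { intros n m x Hnm H1 H2; destruct n as [|[|n]], m as [|[|m]]; simpl in *;
      first [congruence | tauto | eapply Hdisj; eauto]. }
  pose proof (Hadd F HF Hd) as Hs.
  replace (fun x => exists n, F n x) with (fun x => A x \/ B x) in Hs.
  2: { apply set_ext; intros x; split.
       - intros [H|H]; [exists 0%nat | exists 1%nat]; auto.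
       - intros [[|[|n]] H]; simpl in H; auto; tauto. }
  apply (uniqueness_sum _ _ _ Hs).
  assert (Hk : forall k, sum_f_R0 (fun n => mu (F n)) (S k) = mu A + mu B).
  { induction k as [|k IH]; simpl; [lra|]. simpl in IH; rewrite IH, Hemp; lra. }
  intros eps He; exists 1%nat; intros [|k] Hn; [lia|].
  rewrite Hk; unfold Rdist; rewrite Rminus_diag, Rabs_R0; lra.
Qed.

Lemma mu_le_subset A B : borel A -> borel B -> (forall x, A x -> B x) -> mu A <= mu B.
Proof.
  intros HA HB H.
  assert (HBA : borel (fun x => B x /\ ~ A x)) by (apply borel_and, borel_compl; auto).
  replace B with (fun x => A x \/ (B x /\ ~ A x)).
  - rewrite mu_disjoint_or by (auto; tauto).
    pose proof (mu_ge0 _ HBA); lra.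
  - apply set_ext; intros x; split; [intros [?|[? ?]]; auto|].
    intros Hb; destruct (classic (A x)); auto.
Qed.

Lemma mu_or_le A B : borel A -> borel B -> mu (fun x => A x \/ B x) <= mu A + mu B.
Proof.
  intros HA HB.
  assert (HBA : borel (fun x => B x /\ ~ A x)) by (apply borel_and, borel_compl; auto).
  replace (fun x => A x \/ B x) with (fun x => A x \/ (B x /\ ~ A x)).
  - rewrite mu_disjoint_or by (auto; tauto).
    assert (mu (fun x => B x /\ ~ A x) <= mu B) by (apply mu_le_subset; auto; tauto).
    lra.
  - apply set_ext; intros x; split; [intros [?|[? ?]]; auto|].
    intros [?|?]; auto; destruct (classic (A x)); auto.
Qed.

Lemma mu_split A K : borel A -> borel K ->
  mu A = mu (fun x => A x /\ K x) + mu (fun x => A x /\ ~ K x).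
Proof.
  intros HA HK; rewrite <- mu_disjoint_or.
  - f_equal; apply set_ext; intros x; split; [|tauto].
    intros H; destruct (classic (K x)); tauto.
  - apply borel_and; auto.
  - apply borel_and, borel_compl; auto.
  - tauto.
Qed.

Lemma mu_null_countable_union (A : nat -> R -> Prop) :
  (forall n, borel (A n)) -> (forall n, mu (A n) = 0) -> mu (fun x => exists n, A n x) = 0.
Proof.
  intros HA H0.
  set (G := fun n x => forall k, (k < n)%nat -> ~ A k x).
  assert (HG : forall n, borel (G n)).
  { induction n as [|n IH].
    - apply (borel_ext _ _ borel_True); intros x; split; auto; intros _ k Hk; lia.
    - apply (borel_ext (fun x => G n x /\ ~ A n x)); [apply borel_and, borel_compl; auto|].
      intros x; split.
      + intros [H1 H2] k Hk; destruct (Nat.eq_dec k n); subst; auto; apply H1; lia.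
      + intros H; split; [intros k Hk|]; apply H; lia. }
  set (D := fun n x => A n x /\ G n x).
  assert (HD : forall n, borel (D n)) by (intros; apply borel_and; auto).
  assert (Hdisj : forall n m x, n <> m -> D n x -> D m x -> False).
  { intros n m x Hnm [H1 H2] [H3 H4]; destruct (Nat.lt_ge_cases n m).
    - apply (H4 n); auto.
    - apply (H2 m); auto; lia. }
  pose proof (proj2 (proj2 Hmu) D HD Hdisj) as Hs.
  replace (fun x => exists n, D n x) with (fun x => exists n, A n x) in Hs.
  2: { apply set_ext; intros x; split.
       - intros [n Hn]; revert Hn; induction n as [n IH] using Wf_nat.lt_wf_ind; intros Hn.
         destruct (classic (exists k, (k < n)%nat /\ A k x)) as [[k [Hk1 Hk2]]|Hno].
         + apply (IH k); auto.
         + exists n; split; auto; intros k Hk Hak; apply Hno; eauto.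
       - intros [n [Hn _]]; eauto. }
  apply (uniqueness_sum _ _ _ Hs).
  assert (HDz : forall n, mu (D n) = 0).
  { intros n; apply Rle_antisym; [|apply mu_ge0; auto].
    rewrite <- (H0 n); apply mu_le_subset; auto; unfold D; tauto. }
  assert (Hk : forall k, sum_f_R0 (fun n => mu (D n)) k = 0).
  { induction k; simpl; rewrite HDz; [lra | rewrite IHk; lra]. }
  intros eps He; exists 0%nat; intros n _.
  rewrite Hk; unfold Rdist; rewrite Rminus_0_r, Rabs_R0; lra.
Qed.

Lemma mu_finite_disjoint_union F B n : (forall i, (i < n)%nat -> borel (F i)) -> borel B ->
  (forall i j x, (i < n)%nat -> (j < n)%nat -> i <> j -> F i x -> F j x -> False) ->
  fsum (fun i => mu (fun x => F i x /\ B x)) n = mu (fun x => finite_union F n x /\ B x).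
Proof.
  induction n as [|n IH]; intros HF HB Hd; simpl.
  - symmetry; apply mu_eq0_of_empty; intros x [[i [Hi _]] _]; lia.
  - rewrite IH by (auto; intros i j x Hi Hj; apply (Hd i j x); lia).
    rewrite <- mu_disjoint_or.
    + f_equal; apply set_ext; intros x; split.
      * intros [[[i [Hi Hf]] Hb]|[Hf Hb]]; split; auto; [exists i | exists n]; split; auto; lia.
      * intros [[i [Hi Hf]] Hb]; destruct (Nat.eq_dec i n); subst; [right; auto|].
        left; split; auto; exists i; split; auto; lia.
    + apply borel_and; auto; apply borel_finite_union; intros; apply HF; lia.
    + apply borel_and; auto.
    + intros x [[i [Hi Hf]] _] [Hf' _]; apply (Hd i n x); auto; lia.
Qed.

End Measure.

Lemma Rabs_le_inv x e : Rabs x <= e -> - e <= x <= e.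
Proof. unfold Rabs; destruct Rcase_abs; intros; lra. Qed.

Lemma Un_cv_const c : Un_cv (fun _ => c) c.
Proof. intros eps He; exists 0%nat; intros; unfold Rdist; rewrite Rminus_diag, Rabs_R0; lra. Qed.

Lemma Un_cv_ext u w l : Un_cv u l -> (forall N, u N = w N) -> Un_cv w l.
Proof.
  intros H E eps He; destruct (H eps He) as [N HN].
  exists N; intros n Hn; rewrite <- E; auto.
Qed.

Lemma Un_cv_scal c u l : Un_cv u l -> Un_cv (fun N => c * u N) (c * l).
Proof. intros H; apply (CV_mult (fun _ => c) u); auto using Un_cv_const. Qed.

Lemma Un_cv_fsum (u : nat -> nat -> R) (l : nat -> R) n :
  (forall i, Un_cv (fun N => u N i) (l i)) -> Un_cv (fun N => fsum (u N) n) (fsum l n).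
Proof. intros H; induction n; simpl; [apply Un_cv_const | apply CV_plus; auto]. Qed.

Lemma eventually_div_INR_lt C e : 0 < e ->
  exists n0, forall n, (n >= n0)%nat -> C / (INR n + 1) < e.
Proof.
  intros He; destruct (INR_unbounded (C / e)) as [n0 Hn0]; exists n0; intros n Hn.
  assert (INR n0 <= INR n) by (apply le_INR; lia).
  assert (HCe : C / e * e = C) by (field; lra).
  pose proof (pos_INR n).
  apply (Rmult_lt_reg_r (INR n + 1)); [lra|].
  unfold Rdiv at 1; rewrite Rmult_assoc, Rinv_l, Rmult_1_r by lra.
  rewrite <- HCe, (Rmult_comm e); apply Rmult_lt_compat_r; lra.
Qed.

Lemma Un_cv_of_dist_le u l C : 0 <= C -> (forall N, Rabs (u N - l) <= C / (INR N + 1)) ->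
  Un_cv u l.
Proof.
  intros HC H eps He; destruct (eventually_div_INR_lt C eps He) as [n0 Hn0].
  exists n0; intros n Hn; unfold Rdist.
  eapply Rle_lt_trans; [apply H | apply Hn0; auto].
Qed.

Lemma Un_cv_le_eventually u l c : Un_cv u l ->
  (exists N0, forall N, (N >= N0)%nat -> u N <= c) -> l <= c.
Proof.
  intros H [N0 HN0]; destruct (Rle_lt_dec l c) as [|Hlt]; auto.
  destruct (H (l - c)) as [N HN]; [lra|].
  specialize (HN (max N N0) (Nat.le_max_l _ _)).
  specialize (HN0 (max N N0) (Nat.le_max_r _ _)).
  unfold Rdist in HN; apply Rabs_def2 in HN; lra.
Qed.

Lemma Un_cv_of_eventually_lt (A : nat -> R) l : (forall d, l <= A d) ->
  (forall eps, 0 < eps -> exists n, forall d, (n <= d)%nat -> A d < l + eps) -> Un_cv A l.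
Proof.
  intros Hl H eps He; destruct (H eps He) as [n Hn]; exists n; intros d Hd.
  specialize (Hl d); specialize (Hn d Hd).
  unfold Rdist; rewrite Rabs_right; lra.
Qed.

Lemma pow_dominated C c r1 r2 : 0 < c -> 0 <= r1 < r2 ->
  exists n, C * r1 ^ (n * 2) < c * r2 ^ (n * 2).
Proof.
  intros Hc Hr; destruct (Rle_lt_dec C 0) as [HC|HC]; [exists 0%nat; simpl; lra|].
  set (r := r1 / r2).
  assert (Hr0 : 0 <= r) by (apply Rmult_le_pos; [|left; apply Rinv_0_lt_compat]; lra).
  assert (Hr1 : r < 1).
  { apply (Rmult_lt_reg_r r2); [lra|].
    unfold r, Rdiv; rewrite Rmult_assoc, Rinv_l, Rmult_1_r, Rmult_1_l by lra; lra. }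
  destruct (pow_lt_1_zero r ltac:(rewrite Rabs_right; lra) (c / C)) as [N HN].
  { apply Rdiv_lt_0_compat; lra. }
  exists N; specialize (HN (N * 2)%nat ltac:(lia)).
  rewrite Rabs_right in HN by (apply Rle_ge, pow_le; lra).
  assert (E : r1 ^ (N * 2) = r ^ (N * 2) * r2 ^ (N * 2)).
  { rewrite <- Rpow_mult_distr; f_equal; unfold r; field; lra. }
  assert (Hr2 : 0 < r2 ^ (N * 2)) by (apply pow_lt; lra).
  assert (HCr : C * r ^ (N * 2) < c).
  { apply (Rmult_lt_compat_l C) in HN; auto.
    replace (C * (c / C)) with c in HN by (field; lra); auto. }
  rewrite E, <- Rmult_assoc; apply Rmult_lt_compat_r; auto.
Qed.

(* [hankel_form y k v d] is L_y(t^k P(t)^2) for P = sum_{i<=d} v_i t^i, where L_y is the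
   linear functional on polynomials sending t^n to y_n. *)
Definition hankel_form (y : nat -> R) (k : nat) (v : nat -> R) (d : nat) : R :=
  fsum (fun i => fsum (fun j => v i * y (i + j + k)%nat * v j) (S d)) (S d).

Definition poly_eval (v : nat -> R) (d : nat) (t : R) : R := fsum (fun i => v i * t ^ i) (S d).

Definition lower_feasible (y : nat -> R) (d : nat) (a : R) : Prop :=
  forall v, a * hankel_form y 0 v d <= hankel_form y 1 v d.

Definition upper_feasible (y : nat -> R) (d : nat) (b : R) : Prop :=
  forall v, hankel_form y 1 v d <= b * hankel_form y 0 v d.

Lemma psd_theta_iff y d a : psd d (hankel d 1 (theta a) y) <-> lower_feasible y d a.
Proof.
  assert (E : forall v, fsum (fun i => fsum (fun j => v i * hankel d 1 (theta a) y i j * v j)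
      (S d)) (S d) = hankel_form y 1 v d - a * hankel_form y 0 v d).
  { intros v; unfold hankel_form; rewrite <- fsum_scal_l, <- fsum_minus.
    apply fsum_ext; intros i _; rewrite <- fsum_scal_l, <- fsum_minus.
    apply fsum_ext; intros j _; unfold hankel, theta; simpl; ring. }
  unfold psd, lower_feasible; split; intros H v; specialize (H v); rewrite ?E in *; lra.
Qed.

Lemma psd_neg_theta_iff y d b : psd d (hankel d 1 (neg_theta b) y) <-> upper_feasible y d b.
Proof.
  assert (E : forall v, fsum (fun i => fsum (fun j => v i * hankel d 1 (neg_theta b) y i j * v j)
      (S d)) (S d) = b * hankel_form y 0 v d - hankel_form y 1 v d).
  { intros v; unfold hankel_form; rewrite <- fsum_scal_l, <- fsum_minus.
    apply fsum_ext; intros i _; rewrite <- fsum_scal_l, <- fsum_minus.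
    apply fsum_ext; intros j _; unfold hankel, neg_theta; simpl; ring. }
  unfold psd, upper_feasible; split; intros H v; specialize (H v); rewrite ?E in *; lra.
Qed.

Lemma feasible_iff y d a b : feasible y d a b <-> lower_feasible y d a /\ upper_feasible y d b.
Proof. unfold feasible; rewrite psd_theta_iff, psd_neg_theta_iff; tauto. Qed.

Lemma hankel_form_basis0 y k d :
  hankel_form y k (fun i => match i with O => 1 | _ => 0 end) d = y k.
Proof.
  unfold hankel_form; rewrite fsum_first, (fsum_eq0 (fun i => fsum _ _)).
  - rewrite fsum_first, fsum_eq0; [simpl; ring | intros; simpl; ring].
  - intros i _; apply fsum_eq0; intros; simpl; ring.
Qed.

Lemma poly_eval_pow al be n : exists v, forall d, (n <= d)%nat ->
  forall t, poly_eval v d t = (al * t + be) ^ n.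
Proof.
  exists (fun i => if Nat.leb i n then C n i * al ^ i * be ^ (n - i) else 0).
  intros d Hd t; unfold poly_eval; rewrite (fsum_trunc _ n d Hd).
  - rewrite binomial, sum_f_R0_fsum; apply fsum_ext; intros i Hi.
    replace (Nat.leb i n) with true by (symmetry; apply Nat.leb_le; lia).
    rewrite Rpow_mult_distr; ring.
  - intros i Hi; replace (Nat.leb i n) with false by (symmetry; apply Nat.leb_gt; lia); ring.
Qed.

Lemma max_lower_bound_exists {V : Type} (F0 F1 : V -> R) :
  (forall v, 0 <= F0 v) ->
  (exists a, forall v, a * F0 v <= F1 v) ->
  (exists M, forall a, (forall v, a * F0 v <= F1 v) -> a <= M) ->
  exists am, (forall v, am * F0 v <= F1 v) /\
    (forall a, (forall v, a * F0 v <= F1 v) -> a <= am).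
Proof.
  intros H0 [a0 Ha0] [M HM].
  destruct (completeness (fun a => forall v, a * F0 v <= F1 v) (ex_intro _ M HM)
    (ex_intro _ a0 Ha0)) as [am [Hub Hleast]].
  exists am; split; [intros v | exact Hub].
  destruct (H0 v) as [Hp|Hz].
  - assert (Ham : am <= F1 v / F0 v).
    { apply Hleast; intros a Ha; apply (Rmult_le_reg_r (F0 v)); auto.
      unfold Rdiv; rewrite Rmult_assoc, Rinv_l, Rmult_1_r by lra; apply Ha. }
    apply (Rmult_le_compat_r (F0 v)) in Ham; [|lra].
    unfold Rdiv in Ham; rewrite Rmult_assoc, Rinv_l, Rmult_1_r in Ham by lra; exact Ham.
  - rewrite <- Hz; specialize (Ha0 v); rewrite <- Hz in Ha0; lra.
Qed.

Definition lipschitz_on (a b L : R) (g : R -> R) : Prop :=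
  forall x t, a <= x <= b -> a <= t <= b -> Rabs (g x - g t) <= L * Rabs (x - t).

Lemma lipschitz_on_pos_part a b L g : lipschitz_on a b L g ->
  lipschitz_on a b L (fun x => Rmax (g x) 0).
Proof.
  intros H x t Hx Ht; eapply Rle_trans; [|apply H; auto].
  pose proof (Rle_abs (g x - g t)); pose proof (Rle_abs (- (g x - g t))).
  rewrite Rabs_Ropp in *; unfold Rmax.
  destruct (Rle_dec (g x) 0), (Rle_dec (g t) 0); apply Rabs_le; lra.
Qed.

Lemma lipschitz_on_opp a b L g : lipschitz_on a b L g -> lipschitz_on a b L (fun x => - g x).
Proof.
  intros H x t Hx Ht; replace (- g x - - g t) with (- (g x - g t)) by ring.
  rewrite Rabs_Ropp; auto.
Qed.

Lemma lipschitz_on_pow a b k : exists L, 0 <= L /\ lipschitz_on a b L (fun x => x ^ k).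
Proof.
  set (R0 := Rabs a + Rabs b).
  assert (HR0 : 0 <= R0) by (unfold R0; pose proof (Rabs_pos a); pose proof (Rabs_pos b); lra).
  assert (Hbd : forall x, a <= x <= b -> Rabs x <= R0).
  { intros x Hx; pose proof (Rle_abs (- a)); pose proof (Rle_abs b).
    pose proof (Rabs_pos a); pose proof (Rabs_pos b).
    rewrite Rabs_Ropp in *; apply Rabs_le; unfold R0; lra. }
  induction k as [|k [L [HL H]]].
  - exists 0; split; [lra|]; intros x t _ _; simpl.
    rewrite Rminus_diag, Rabs_R0; pose proof (Rabs_pos (x - t)); lra.
  - exists (R0 * L + R0 ^ k); split.
    { apply Rplus_le_le_0_compat; [apply Rmult_le_pos | apply pow_le]; auto. }
    intros x t Hx Ht.
    replace (x ^ S k - t ^ S k) with (x * (x ^ k - t ^ k) + t ^ k * (x - t)) by (simpl; ring).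
    eapply Rle_trans; [apply Rabs_triang|]; rewrite !Rabs_mult.
    assert (Rabs x * Rabs (x ^ k - t ^ k) <= R0 * (L * Rabs (x - t))).
    { apply Rmult_le_compat; auto using Rabs_pos. }
    assert (Rabs (t ^ k) * Rabs (x - t) <= R0 ^ k * Rabs (x - t)).
    { apply Rmult_le_compat_r; [apply Rabs_pos|].
      rewrite <- RPow_abs; apply pow_incr; split; auto using Rabs_pos. }
    lra.
Qed.

Section RiemannSums.
Variable mu : (R -> Prop) -> R.
Hypothesis Hmu : is_finite_borel_measure mu.
Variables a b : R.
Hypothesis Hab : a <= b.
Hypothesis Hconc : mu (fun x => ~ (a <= x <= b)) = 0.

(* The N+1 cells of width [mesh N] cover [a, b + 1), which contains [a, b]; the extra 1
   keeps the mesh positive when a = b. *)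
Definition mesh (N : nat) : R := (b - a + 1) / (INR N + 1).
Definition cell (N j : nat) (x : R) : Prop :=
  a <= x <= b /\ a + INR j * mesh N <= x < a + (INR j + 1) * mesh N.
Definition tag (N j : nat) : R := Rmin (a + INR j * mesh N) b.
Definition riemann_sum (f : R -> R) (N : nat) : R :=
  fsum (fun j => f (tag N j) * mu (cell N j)) (S N).
Definition riemann_sums_cv (f : R -> R) (l : R) : Prop := Un_cv (riemann_sum f) l.

Lemma mesh_pos N : 0 < mesh N.
Proof. unfold mesh; apply Rdiv_lt_0_compat; [lra | pose proof (pos_INR N); lra]. Qed.

Lemma borel_cell N j : borel (cell N j).
Proof. apply borel_and; [apply borel_Icc | apply borel_and; [apply borel_ge | apply borel_lt]]. Qed.

Lemma cell_disjoint N j k x : j <> k -> cell N j x -> cell N k x -> False.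
Proof.
  intros Hjk [_ [H1 H2]] [_ [H3 H4]]; pose proof (mesh_pos N).
  destruct (Nat.lt_ge_cases j k).
  - assert (INR j + 1 <= INR k) by (rewrite <- S_INR; apply le_INR; lia).
    assert ((INR j + 1) * mesh N <= INR k * mesh N) by (apply Rmult_le_compat_r; lra); lra.
  - assert (INR k + 1 <= INR j) by (rewrite <- S_INR; apply le_INR; lia).
    assert ((INR k + 1) * mesh N <= INR j * mesh N) by (apply Rmult_le_compat_r; lra); lra.
Qed.

Lemma cell_cover N x : a <= x <= b -> exists j, (j < S N)%nat /\ cell N j x.
Proof.
  intros Hx.
  assert (Hstep : forall n, a <= x < a + (INR n + 1) * mesh N ->
    exists j, (j <= n)%nat /\ a + INR j * mesh N <= x < a + (INR j + 1) * mesh N).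
  { induction n as [|n IH]; intros Hn.
    - exists 0%nat; simpl in *; split; [lia | lra].
    - destruct (Rlt_dec x (a + (INR n + 1) * mesh N)).
      + destruct IH as [j [Hj Hj2]]; [lra | exists j; split; auto].
      + exists (S n); split; auto; rewrite S_INR in *; lra. }
  destruct (Hstep N) as [j [Hj Hj2]].
  { replace ((INR N + 1) * mesh N) with (b - a + 1)
      by (unfold mesh; field; pose proof (pos_INR N); lra); lra. }
  exists j; split; [lia | split; auto].
Qed.

Lemma tag_mem N j : a <= tag N j <= b.
Proof.
  unfold tag, Rmin; pose proof (mesh_pos N); pose proof (pos_INR j).
  assert (0 <= INR j * mesh N) by (apply Rmult_le_pos; lra).
  destruct Rle_dec; lra.
Qed.

Lemma tag_close N j x : cell N j x -> 0 <= x - tag N j <= mesh N.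
Proof. intros [Hx [H1 H2]]; unfold tag, Rmin; destruct Rle_dec; lra. Qed.

Lemma mu_cell_ge0 N j : 0 <= mu (cell N j).
Proof. apply (mu_ge0 mu Hmu), borel_cell. Qed.

Lemma mu_restrict B : borel B -> mu B = mu (fun x => (a <= x <= b) /\ B x).
Proof.
  intros HB; rewrite (mu_split mu Hmu B (fun x => a <= x <= b) HB (borel_Icc a b)).
  assert (H0 : mu (fun x => B x /\ ~ (a <= x <= b)) = 0).
  { apply Rle_antisym.
    - rewrite <- Hconc; apply (mu_le_subset mu Hmu); try tauto.
      + apply borel_and; auto using borel_not_Icc.
      + apply borel_not_Icc.
    - apply (mu_ge0 mu Hmu), borel_and; auto using borel_not_Icc. }
  rewrite H0, Rplus_0_r; f_equal; apply set_ext; tauto.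
Qed.

Lemma mu_Icc_total : mu (fun x => a <= x <= b) = mu (fun _ => True).
Proof. rewrite (mu_restrict _ borel_True); f_equal; apply set_ext; tauto. Qed.

Lemma mu_cells N B : borel B ->
  fsum (fun j => mu (fun x => cell N j x /\ B x)) (S N) = mu (fun x => (a <= x <= b) /\ B x).
Proof.
  intros HB; rewrite (mu_finite_disjoint_union mu Hmu); auto using borel_cell.
  - f_equal; apply set_ext; intros x; split.
    + intros [[j [_ [Hc _]]] Hb]; auto.
    + intros [Hx Hb]; split; auto; destruct (cell_cover N x Hx) as [j Hj]; exists j; auto.
  - intros i j x _ _ Hij H1 H2; eapply cell_disjoint; eauto.
Qed.

Lemma fsum_mu_cell N : fsum (fun j => mu (cell N j)) (S N) = mu (fun x => a <= x <= b).
Proof.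
  transitivity (mu (fun x => (a <= x <= b) /\ True)).
  - rewrite <- (mu_cells N _ borel_True); apply fsum_ext; intros.
    f_equal; apply set_ext; tauto.
  - f_equal; apply set_ext; tauto.
Qed.

Lemma riemann_sum_ext f g N : (forall t, f t = g t) -> riemann_sum f N = riemann_sum g N.
Proof. intros H; unfold riemann_sum; apply fsum_ext; intros; rewrite H; auto. Qed.

Lemma riemann_sum_minus f g N :
  riemann_sum (fun t => f t - g t) N = riemann_sum f N - riemann_sum g N.
Proof. unfold riemann_sum; rewrite <- fsum_minus; apply fsum_ext; intros; ring. Qed.

Lemma riemann_sum_scal c f N : riemann_sum (fun t => c * f t) N = c * riemann_sum f N.
Proof. unfold riemann_sum; rewrite <- fsum_scal_l; apply fsum_ext; intros; ring. Qed.

Lemma riemann_sum_fsum (G : nat -> R -> R) n N :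
  riemann_sum (fun t => fsum (fun i => G i t) n) N = fsum (fun i => riemann_sum (G i) N) n.
Proof.
  unfold riemann_sum; rewrite <- fsum_comm; apply fsum_ext; intros.
  rewrite fsum_scal_r; auto.
Qed.

Lemma riemann_sum_ge0 f N : (forall t, a <= t <= b -> 0 <= f t) -> 0 <= riemann_sum f N.
Proof.
  intros H; unfold riemann_sum; rewrite <- (fsum_eq0 (fun _ => 0) (S N)) by auto.
  apply fsum_le; intros; apply Rmult_le_pos; [apply H, tag_mem | apply mu_cell_ge0].
Qed.

(* Cells meeting (z - dl, z + dl) have their tags within 2 dl of z once the mesh is below
   dl, so there the integrand is at most C2 - c1; elsewhere it is at most C2. *)
Lemma riemann_sum_bump q z dl c1 C2 N : mesh N <= dl -> 0 <= c1 ->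
  (forall t, a <= t <= b -> q t <= C2) ->
  (forall t, a <= t <= b -> Rabs (t - z) <= 2 * dl -> q t <= C2 - c1) ->
  riemann_sum q N <= C2 * mu (fun x => a <= x <= b)
                     - c1 * mu (fun x => (a <= x <= b) /\ z - dl < x < z + dl).
Proof.
  intros Hmesh Hc1 H1 H2.
  rewrite <- (fsum_mu_cell N), <- (mu_cells N _ (borel_Ioo (z - dl) (z + dl))).
  rewrite <- !fsum_scal_l, <- fsum_minus; unfold riemann_sum; apply fsum_le; intros j _.
  assert (HB : borel (fun x => cell N j x /\ z - dl < x < z + dl))
    by (apply borel_and; [apply borel_cell | apply borel_Ioo]).
  assert (mu (fun x => cell N j x /\ z - dl < x < z + dl) <= mu (cell N j))
    by (apply (mu_le_subset mu Hmu); auto using borel_cell; tauto).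
  pose proof (mu_ge0 mu Hmu _ HB); pose proof (mu_cell_ge0 N j).
  destruct (classic (exists x, cell N j x /\ z - dl < x < z + dl)) as [[x [Hc Hx]]|Hno].
  - assert (q (tag N j) <= C2 - c1).
    { apply H2; [apply tag_mem|]; pose proof (tag_close N j x Hc); apply Rabs_le; lra. }
    assert (q (tag N j) * mu (cell N j) <= (C2 - c1) * mu (cell N j))
      by (apply Rmult_le_compat_r; lra).
    assert (c1 * mu (fun x => cell N j x /\ z - dl < x < z + dl) <= c1 * mu (cell N j))
      by (apply Rmult_le_compat_l; lra).
    lra.
  - rewrite (mu_eq0_of_empty mu Hmu (fun x => cell N j x /\ z - dl < x < z + dl))
      by (intros x Hx; apply Hno; eauto).
    assert (q (tag N j) <= C2) by (apply H1, tag_mem).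
    assert (q (tag N j) * mu (cell N j) <= C2 * mu (cell N j)) by (apply Rmult_le_compat_r; lra).
    lra.
Qed.

Lemma lipschitz_on_cell g L N j x : 0 <= L -> lipschitz_on a b L g -> cell N j x ->
  Rabs (g x - g (tag N j)) <= L * mesh N.
Proof.
  intros HL Hlip Hc; pose proof (tag_close N j x Hc).
  eapply Rle_trans; [apply Hlip; [apply Hc | apply tag_mem]|].
  apply Rmult_le_compat_l; auto; rewrite Rabs_right; lra.
Qed.

Lemma simple_lower_near_riemann_sum g L N : (forall x, 0 <= g x) -> 0 <= L ->
  lipschitz_on a b L g ->
  exists v, simple_lower mu g v /\
    riemann_sum g N - L * mesh N * mu (fun x => a <= x <= b) <= v.
Proof.
  intros Hg HL Hlip.
  set (c := fun j => Rmax (g (tag N j) - L * mesh N) 0).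
  exists (fsum (fun j => c j * mu (cell N j)) (S N)); split.
  - exists (S N), c, (cell N); split; [|split; [|split]]; auto.
    + intros i _; split; [apply borel_cell | apply Rmax_r].
    + intros i j x _ _ Hij H1 H2; eapply cell_disjoint; eauto.
    + intros i x _ Hc; unfold c; apply Rmax_lub; auto.
      pose proof (Rabs_le_inv _ _ (lipschitz_on_cell g L N i x HL Hlip Hc)); lra.
  - rewrite <- (fsum_mu_cell N), <- fsum_scal_l; unfold riemann_sum; rewrite <- fsum_minus.
    apply fsum_le; intros j _.
    replace (g (tag N j) * mu (cell N j) - L * mesh N * mu (cell N j))
      with ((g (tag N j) - L * mesh N) * mu (cell N j)) by ring.
    apply Rmult_le_compat_r; [apply mu_cell_ge0 | apply Rmax_l].
Qed.

Lemma simple_lower_le_riemann_sum g L N v : (forall x, 0 <= g x) -> 0 <= L ->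
  lipschitz_on a b L g -> simple_lower mu g v ->
  v <= riemann_sum g N + L * mesh N * mu (fun x => a <= x <= b).
Proof.
  intros Hg HL Hlip [n [c [A [HA [Hd [Hc Hv]]]]]]; subst v.
  assert (HAc : forall i j, (i < n)%nat -> borel (fun x => A i x /\ cell N j x))
    by (intros; apply borel_and; [apply HA | apply borel_cell]; auto).
  rewrite (fsum_ext _ (fun i => fsum (fun j => c i * mu (fun x => cell N j x /\ A i x)) (S N)) n).
  2: { intros i Hi; rewrite fsum_scal_l, mu_cells, <- mu_restrict; auto; apply HA; auto. }
  rewrite fsum_comm, <- (fsum_mu_cell N), <- fsum_scal_l; unfold riemann_sum; rewrite <- fsum_plus.
  apply fsum_le; intros j _.
  assert (HU : fsum (fun i => mu (fun x => A i x /\ cell N j x)) n <= mu (cell N j)).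
  { rewrite (mu_finite_disjoint_union mu Hmu); auto using borel_cell; [|intros; apply HA; auto].
    apply (mu_le_subset mu Hmu); auto using borel_cell; [|tauto].
    apply borel_and; [apply borel_finite_union; intros; apply HA; auto | apply borel_cell]. }
  set (bound := g (tag N j) + L * mesh N).
  apply Rle_trans with (fsum (fun i => bound * mu (fun x => A i x /\ cell N j x)) n).
  - apply fsum_le; intros i Hi.
    replace (fun x => cell N j x /\ A i x) with (fun x => A i x /\ cell N j x)
      by (apply set_ext; tauto).
    pose proof (mu_ge0 mu Hmu _ (HAc i j Hi)).
    destruct (classic (exists x, A i x /\ cell N j x)) as [[x [Ha Hcx]]|Hno].
    + apply Rmult_le_compat_r; auto; specialize (Hc i x Hi Ha).
      pose proof (Rabs_le_inv _ _ (lipschitz_on_cell g L N j x HL Hlip Hcx)); unfold bound; lra.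
    + rewrite (mu_eq0_of_empty mu Hmu (fun x => A i x /\ cell N j x))
        by (intros x Hx; apply Hno; eauto); lra.
  - rewrite fsum_scal_l.
    replace (g (tag N j) * mu (cell N j) + L * mesh N * mu (cell N j))
      with (bound * mu (cell N j)) by (unfold bound; ring).
    apply Rmult_le_compat_l; auto; unfold bound; pose proof (Hg (tag N j));
      pose proof (mesh_pos N); assert (0 <= L * mesh N) by (apply Rmult_le_pos; lra); lra.
Qed.

Lemma riemann_sum_near_lub g L p N : (forall x, 0 <= g x) -> 0 <= L -> lipschitz_on a b L g ->
  is_lub (simple_lower mu g) p ->
  Rabs (p - riemann_sum g N) <= L * mesh N * mu (fun x => a <= x <= b).
Proof.
  intros Hg HL Hlip [Hub Hleast]; apply Rabs_le; split.
  - destruct (simple_lower_near_riemann_sum g L N Hg HL Hlip) as [v [Hv Hle]].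
    specialize (Hub v Hv); lra.
  - cut (p <= riemann_sum g N + L * mesh N * mu (fun x => a <= x <= b)); [lra|].
    apply Hleast; intros v Hv; apply (simple_lower_le_riemann_sum g L); auto.
Qed.

Variable y : nat -> R.
Hypothesis Hy : is_moment_seq mu y.

Lemma riemann_sums_cv_moment k : riemann_sums_cv (fun t => t ^ k) (y k).
Proof.
  destruct (lipschitz_on_pow a b k) as [L [HL Hlip]].
  destruct (Hy k) as [p [q [Hp [Hq Hyk]]]].
  set (mK := mu (fun x => a <= x <= b)).
  assert (HmK : 0 <= mK) by (apply (mu_ge0 mu Hmu), borel_Icc).
  apply Un_cv_of_dist_le with (C := 2 * L * (b - a + 1) * mK).
  { apply Rmult_le_pos; auto; apply Rmult_le_pos; lra. }
  intros N.
  assert (Hp' : Rabs (p - riemann_sum (fun x => Rmax (x ^ k) 0) N) <= L * mesh N * mK).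
  { apply riemann_sum_near_lub; auto using Rmax_r, lipschitz_on_pos_part. }
  assert (Hq' : Rabs (q - riemann_sum (fun x => Rmax (- x ^ k) 0) N) <= L * mesh N * mK).
  { apply riemann_sum_near_lub; auto using Rmax_r, lipschitz_on_pos_part, lipschitz_on_opp. }
  replace (riemann_sum (fun t => t ^ k) N) with
    (riemann_sum (fun x => Rmax (x ^ k) 0) N - riemann_sum (fun x => Rmax (- x ^ k) 0) N).
  2: { rewrite <- riemann_sum_minus; apply riemann_sum_ext; intros t.
       unfold Rmax; destruct Rle_dec, Rle_dec; lra. }
  replace (2 * L * (b - a + 1) * mK / (INR N + 1)) with (2 * (L * mesh N * mK))
    by (unfold mesh; field; pose proof (pos_INR N); lra).
  apply Rabs_le_inv in Hp'; apply Rabs_le_inv in Hq'; rewrite Hyk; apply Rabs_le; lra.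
Qed.

Lemma riemann_sums_cv_hankel_form k v d :
  riemann_sums_cv (fun t => t ^ k * poly_eval v d t ^ 2) (hankel_form y k v d).
Proof.
  apply Un_cv_ext with (u := fun N => fsum (fun i => fsum (fun j =>
    (v i * v j) * riemann_sum (fun t => t ^ (i + j + k)) N) (S d)) (S d)).
  - unfold hankel_form; apply Un_cv_fsum; intros i; apply Un_cv_fsum; intros j.
    replace (v i * y (i + j + k)%nat * v j) with ((v i * v j) * y (i + j + k)%nat) by ring.
    apply Un_cv_scal, riemann_sums_cv_moment.
  - intros N; symmetry.
    rewrite (riemann_sum_ext _
      (fun t => fsum (fun i => fsum (fun j => (v i * v j) * t ^ (i + j + k)) (S d)) (S d))).
    + rewrite riemann_sum_fsum; apply fsum_ext; intros i _.
      rewrite riemann_sum_fsum; apply fsum_ext; intros j _; apply riemann_sum_scal.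
    + intros t; replace (poly_eval v d t ^ 2) with (poly_eval v d t * poly_eval v d t) by ring.
      unfold poly_eval; rewrite <- fsum_scal_r, <- fsum_scal_l; apply fsum_ext; intros i _.
      rewrite <- fsum_scal_l, <- fsum_scal_l; apply fsum_ext; intros j _.
      rewrite !pow_add; ring.
Qed.

Lemma riemann_sums_cv_affine al be v d :
  riemann_sums_cv (fun t => (al * t + be) * poly_eval v d t ^ 2)
    (al * hankel_form y 1 v d + be * hankel_form y 0 v d).
Proof.
  apply Un_cv_ext with (u := fun N => al * riemann_sum (fun t => t ^ 1 * poly_eval v d t ^ 2) N
                              + be * riemann_sum (fun t => t ^ 0 * poly_eval v d t ^ 2) N).
  - apply CV_plus; apply Un_cv_scal, riemann_sums_cv_hankel_form.
  - intros N; rewrite <- !riemann_sum_scal; unfold riemann_sum; rewrite <- fsum_plus.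
    apply fsum_ext; intros; simpl; ring.
Qed.

Lemma riemann_sums_cv_ge0 q l : riemann_sums_cv q l ->
  (forall t, a <= t <= b -> 0 <= q t) -> 0 <= l.
Proof.
  intros Hl Hq; apply Rle_cv_lim with (Un := fun _ => 0) (Vn := riemann_sum q); auto using Un_cv_const.
  intros; apply riemann_sum_ge0; auto.
Qed.

Lemma riemann_sums_cv_bump q l z dl c1 C2 : riemann_sums_cv q l -> 0 < dl -> 0 <= c1 ->
  (forall t, a <= t <= b -> q t <= C2) ->
  (forall t, a <= t <= b -> Rabs (t - z) <= 2 * dl -> q t <= C2 - c1) ->
  l <= C2 * mu (fun x => a <= x <= b) - c1 * mu (fun x => (a <= x <= b) /\ z - dl < x < z + dl).
Proof.
  intros Hl Hdl Hc1 H1 H2; apply (Un_cv_le_eventually _ _ _ Hl).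
  destruct (eventually_div_INR_lt (b - a + 1) dl Hdl) as [n0 Hn0].
  exists n0; intros N HN; apply riemann_sum_bump; auto; left; apply Hn0; auto.
Qed.

Lemma hankel_form0_ge0 v d : 0 <= hankel_form y 0 v d.
Proof.
  apply (riemann_sums_cv_ge0 _ _ (riemann_sums_cv_hankel_form 0 v d)).
  intros t _; simpl; rewrite Rmult_1_l; apply pow2_ge_0.
Qed.

Lemma lower_feasible_left_end d : lower_feasible y d a.
Proof.
  intros v; pose proof (riemann_sums_cv_ge0 _ _ (riemann_sums_cv_affine 1 (- a) v d)).
  cut (0 <= 1 * hankel_form y 1 v d + - a * hankel_form y 0 v d); [lra|].
  apply H; intros t Ht; apply Rmult_le_pos; [lra | apply pow2_ge_0].
Qed.

Lemma upper_feasible_right_end d : upper_feasible y d b.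
Proof.
  intros v; cut (0 <= -1 * hankel_form y 1 v d + b * hankel_form y 0 v d); [lra|].
  apply (riemann_sums_cv_ge0 _ _ (riemann_sums_cv_affine (-1) b v d)).
  intros t Ht; apply Rmult_le_pos; [lra | apply pow2_ge_0].
Qed.

Lemma moment0_eq : y 0%nat = mu (fun x => a <= x <= b).
Proof.
  apply (UL_sequence (riemann_sum (fun t => t ^ 0))); [apply riemann_sums_cv_moment|].
  apply Un_cv_ext with (u := fun _ => mu (fun x => a <= x <= b)); [apply Un_cv_const|].
  intros N; rewrite <- (fsum_mu_cell N); unfold riemann_sum; apply fsum_ext; intros; simpl; ring.
Qed.

End RiemannSums.

Lemma open_set_Ioo c d : open_set (fun x => c < x < d).
Proof.
  intros x Hx; assert (Hp : 0 < Rmin (x - c) (d - x)) by (apply Rmin_pos; lra).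
  exists (mkposreal _ Hp); intros z Hz; unfold disc in Hz; simpl in Hz.
  apply Rabs_def2 in Hz; pose proof (Rmin_l (x - c) (d - x)); pose proof (Rmin_r (x - c) (d - x)).
  lra.
Qed.

Lemma closed_set_opp S : closed_set S -> closed_set (fun t => S (- t)).
Proof.
  intros HS x Hx; destruct (HS (- x) Hx) as [dl Hdl]; exists dl; intros t Ht; apply Hdl.
  unfold disc in *; replace (- t - - x) with (- (t - x)) by ring; rewrite Rabs_Ropp; auto.
Qed.

Lemma closed_bounded_has_max S : closed_set S -> bound S -> (exists x, S x) ->
  exists s, S s /\ forall x, S x -> x <= s.
Proof.
  intros HS Hb Hne; destruct (completeness S Hb Hne) as [s [Hub Hleast]].
  exists s; split; auto; apply NNPP; intros Hs.
  destruct (HS s Hs) as [dl Hdl].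
  assert (s <= s - dl); [|pose proof (cond_pos dl); lra].
  apply Hleast; intros x Hx; destruct (Rle_lt_dec x (s - dl)) as [|Hlt]; auto.
  exfalso; apply (Hdl x); auto; unfold disc; pose proof (Hub x Hx); apply Rabs_def1; lra.
Qed.

Lemma exists_INR_bracket e : 0 < e -> exists n, e <= INR n + 1 /\ / (INR n + 1) <= e.
Proof.
  intros He; destruct (INR_unbounded (e + / e)) as [n Hn]; exists n.
  pose proof (Rinv_0_lt_compat e He); split; [lra|].
  rewrite <- (Rinv_inv e) at 1; apply Rinv_le_contravar; auto; lra.
Qed.

Section Support.
Variable mu : (R -> Prop) -> R.
Hypothesis Hmu : is_finite_borel_measure mu.

Lemma supp_nbhd_pos z dl : supp mu z -> 0 < dl -> 0 < mu (fun x => z - dl < x < z + dl).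
Proof.
  intros Hz Hdl; destruct (mu_ge0 mu Hmu _ (borel_Ioo (z - dl) (z + dl))) as [|H0]; auto.
  exfalso.
  assert (E : (fun x => ~ ~ (z - dl < x < z + dl)) = (fun x => z - dl < x < z + dl))
    by (apply set_ext; intros x; split; [apply NNPP | tauto]).
  apply (Hz (fun x => ~ (z - dl < x < z + dl))); [| rewrite E; auto | lra].
  unfold closed_set, complementary; rewrite E; apply open_set_Ioo.
Qed.

Lemma not_supp_nbhd_null x : ~ supp mu x ->
  exists dl, 0 < dl /\ mu (fun t => x - dl < t < x + dl) = 0.
Proof.
  intros H; apply not_all_ex_not in H; destruct H as [C HC].
  apply imply_to_and in HC; destruct HC as [Hcl HC].
  apply imply_to_and in HC; destruct HC as [Hnull HCx].
  destruct (Hcl x HCx) as [dl Hdl]; exists dl; split; [apply cond_pos|].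
  apply Rle_antisym; [|apply (mu_ge0 mu Hmu), borel_Ioo].
  rewrite <- Hnull; apply (mu_le_subset mu Hmu); [apply borel_Ioo | apply borel_open; auto|].
  intros t Ht; apply Hdl; unfold disc; apply Rabs_def1; lra.
Qed.

Lemma null_Ioo_not_supp c d z : mu (fun x => c < x < d) = 0 -> c < z < d -> ~ supp mu z.
Proof.
  intros H0 Hz Hs; set (dl := Rmin (z - c) (d - z)).
  assert (Hdl : 0 < dl) by (apply Rmin_pos; lra).
  pose proof (supp_nbhd_pos z dl Hs Hdl).
  assert (mu (fun x => z - dl < x < z + dl) <= mu (fun x => c < x < d)); [|lra].
  apply (mu_le_subset mu Hmu); try apply borel_Ioo; intros x Hx.
  pose proof (Rmin_l (z - c) (d - z)); pose proof (Rmin_r (z - c) (d - z)); unfold dl in Hx; lra.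
Qed.

Lemma closed_set_supp : closed_set (supp mu).
Proof.
  intros x Hx; destruct (not_supp_nbhd_null x Hx) as [dl [Hdl H0]].
  exists (mkposreal dl Hdl); intros t Ht; unfold disc in Ht; simpl in Ht.
  apply Rabs_def2 in Ht; apply (null_Ioo_not_supp _ _ t H0); lra.
Qed.

(* A continuity induction: the set of u with mu [c, u] = 0 reaches s. *)
Lemma mu_Icc_null_off_supp c s : c <= s -> (forall x, c <= x <= s -> ~ supp mu x) ->
  mu (fun x => c <= x <= s) = 0.
Proof.
  intros Hcs Hns.
  set (T := fun u => c <= u <= s /\ mu (fun x => c <= x <= u) = 0).
  assert (Tc : T c).
  { split; [lra|]; destruct (not_supp_nbhd_null c (Hns c ltac:(lra))) as [dl [Hdl H0]].
    apply Rle_antisym; [|apply (mu_ge0 mu Hmu), borel_Icc].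
    rewrite <- H0; apply (mu_le_subset mu Hmu); [apply borel_Icc | apply borel_Ioo | intros; lra]. }
  destruct (completeness T (ex_intro _ s (fun u Hu => proj2 (proj1 Hu))) (ex_intro _ c Tc))
    as [sg [Hub Hleast]].
  assert (Hcsg : c <= sg) by (apply Hub; auto).
  assert (Hsgs : sg <= s) by (apply Hleast; intros u [Hu _]; lra).
  destruct (not_supp_nbhd_null sg (Hns sg ltac:(lra))) as [dl [Hdl H0]].
  assert (Hu : exists u, T u /\ sg - dl < u).
  { apply NNPP; intros Hn; assert (sg <= sg - dl); [|lra].
    apply Hleast; intros u Tu; destruct (Rle_lt_dec u (sg - dl)); auto.
    exfalso; apply Hn; eauto. }
  destruct Hu as [u [[Hu1 Hu2] Hu3]].
  set (w := Rmin (sg + dl / 2) s).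
  assert (Hwl : w <= s) by apply Rmin_r; assert (Hwu : w <= sg + dl / 2) by apply Rmin_l.
  assert (Hw : T w).
  { assert (c <= w) by (unfold w, Rmin; destruct Rle_dec; lra).
    split; [lra|]; apply Rle_antisym; [|apply (mu_ge0 mu Hmu), borel_Icc].
    apply Rle_trans with (mu (fun x => (c <= x <= u) \/ (sg - dl < x < sg + dl))).
    - apply (mu_le_subset mu Hmu); [apply borel_Icc | apply borel_or; apply borel_Icc || apply borel_Ioo|].
      intros x Hx; destruct (Rle_lt_dec x u); [left | right]; lra.
    - eapply Rle_trans; [apply (mu_or_le mu Hmu); apply borel_Icc || apply borel_Ioo | lra]. }
  assert (w <= sg) by (apply Hub; auto).
  assert (Hws : w = s) by (unfold w, Rmin in *; destruct Rle_dec; lra).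
  rewrite <- Hws; apply Hw.
Qed.

Lemma supp_nonempty : mu (fun _ => True) <> 0 -> exists x, supp mu x.
Proof.
  intros Hnz; apply NNPP; intros Hn; apply Hnz.
  replace (fun _ : R => True) with (fun x => exists n : nat, - INR n <= x <= INR n).
  - apply (mu_null_countable_union mu Hmu (fun n x => - INR n <= x <= INR n)).
    + intros; apply borel_Icc.
    + intros n; apply mu_Icc_null_off_supp; [pose proof (pos_INR n); lra|].
      intros x _ Hx; apply Hn; eauto.
  - apply set_ext; intros x; split; auto; intros _.
    destruct (INR_unbounded (Rabs x)) as [n Hn']; exists n; apply Rabs_le_inv; lra.
Qed.

Lemma mu_outside_supp_hull l u : (forall x, supp mu x -> l <= x <= u) ->
  mu (fun x => ~ (l <= x <= u)) = 0.
Proof.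
  intros Hsupp.
  set (B := fun n x => (l - INR n - 1 <= x <= l - / (INR n + 1))
                       \/ (u + / (INR n + 1) <= x <= u + INR n + 1)).
  assert (Hinv : forall n, 0 < / (INR n + 1) <= 1).
  { intros n; pose proof (pos_INR n); split; [apply Rinv_0_lt_compat; lra|].
    rewrite <- Rinv_1; apply Rinv_le_contravar; lra. }
  replace (fun x => ~ (l <= x <= u)) with (fun x => exists n, B n x).
  - apply (mu_null_countable_union mu Hmu); [intros n; apply borel_or; apply borel_Icc|].
    intros n; pose proof (Hinv n); pose proof (pos_INR n).
    apply Rle_antisym; [|apply (mu_ge0 mu Hmu), borel_or; apply borel_Icc].
    eapply Rle_trans; [apply (mu_or_le mu Hmu); apply borel_Icc|].
    rewrite !mu_Icc_null_off_supp; try lra;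
      intros x Hx Hs; pose proof (Hsupp x Hs); lra.
  - apply set_ext; intros x; split.
    + intros [n [Hx|Hx]]; pose proof (Hinv n); lra.
    + intros Hx; destruct (Rlt_le_dec x l).
      * destruct (exists_INR_bracket (l - x)) as [n [Hn1 Hn2]]; [lra|]; exists n; left; lra.
      * destruct (exists_INR_bracket (x - u)) as [n [Hn1 Hn2]]; [lra|]; exists n; right; lra.
Qed.

End Support.

Lemma bump_bounds eps D u n : 0 < eps < D -> 0 <= u <= D ->
  (u - eps) * ((D - u) ^ n) ^ 2 <= D * (D - eps) ^ (n * 2) /\
  (u <= eps / 2 -> (u - eps) * ((D - u) ^ n) ^ 2
                   <= D * (D - eps) ^ (n * 2) - eps / 2 * (D - eps / 2) ^ (n * 2)).
Proof.
  intros He Hu; rewrite <- pow_mult.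
  assert (HX : 0 <= (D - u) ^ (n * 2)) by (apply pow_le; lra).
  assert (0 <= D * (D - eps) ^ (n * 2)) by (apply Rmult_le_pos; [lra | apply pow_le; lra]).
  split.
  - destruct (Rle_lt_dec u eps).
    + assert ((u - eps) * (D - u) ^ (n * 2) <= 0); [|lra].
      replace 0 with (0 * (D - u) ^ (n * 2)) by ring; apply Rmult_le_compat_r; lra.
    + apply Rmult_le_compat; try lra; apply pow_incr; lra.
  - intros Hu2.
    assert ((D - eps / 2) ^ (n * 2) <= (D - u) ^ (n * 2)) by (apply pow_incr; lra).
    assert (0 <= (D - eps / 2) ^ (n * 2)) by (apply pow_le; lra).
    assert ((u - eps) * (D - u) ^ (n * 2) <= - (eps / 2) * (D - u) ^ (n * 2))
      by (apply Rmult_le_compat_r; lra).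
    assert (eps / 2 * (D - eps / 2) ^ (n * 2) <= eps / 2 * (D - u) ^ (n * 2))
      by (apply Rmult_le_compat_l; lra).
    lra.
Qed.

Section Extremes.
Variable mu : (R -> Prop) -> R.
Variable y : nat -> R.
Hypothesis Hmu : is_finite_borel_measure mu.
Hypothesis Hnz : mu (fun _ => True) <> 0.
Hypothesis Hy : is_moment_seq mu y.
Variables a_s b_s : R.
Hypothesis Ha : supp mu a_s.
Hypothesis Hb : supp mu b_s.
Hypothesis Hsupp : forall x, supp mu x -> a_s <= x <= b_s.

Let Hab : a_s <= b_s := proj1 (Hsupp b_s Hb).
Let Hconc : mu (fun x => ~ (a_s <= x <= b_s)) = 0 := mu_outside_supp_hull mu Hmu a_s b_s Hsupp.

Lemma mu_hull_pos : 0 < mu (fun x => a_s <= x <= b_s).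
Proof.
  rewrite (mu_Icc_total mu Hmu a_s b_s Hconc).
  destruct (mu_ge0 mu Hmu _ borel_True); auto; congruence.
Qed.

Lemma lower_feasible_le d a : lower_feasible y d a -> a <= b_s.
Proof.
  intros H; specialize (H (fun i => match i with O => 1 | _ => 0 end)).
  pose proof (upper_feasible_right_end mu Hmu a_s b_s Hab Hconc y Hy d
    (fun i => match i with O => 1 | _ => 0 end)).
  rewrite !hankel_form_basis0 in *.
  pose proof mu_hull_pos; rewrite <- (moment0_eq mu Hmu a_s b_s Hab Hconc y Hy) in *.
  apply (Rmult_le_reg_r (y 0%nat)); auto; lra.
Qed.

Lemma upper_feasible_ge d b : upper_feasible y d b -> a_s <= b.
Proof.
  intros H; specialize (H (fun i => match i with O => 1 | _ => 0 end)).
  pose proof (lower_feasible_left_end mu Hmu a_s b_s Hab Hconc y Hy d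
    (fun i => match i with O => 1 | _ => 0 end)).
  rewrite !hankel_form_basis0 in *.
  pose proof mu_hull_pos; rewrite <- (moment0_eq mu Hmu a_s b_s Hab Hconc y Hy) in *.
  apply (Rmult_le_reg_r (y 0%nat)); auto; lra.
Qed.

Lemma optimal_exists d : exists a b, optimal y d a b.
Proof.
  assert (H0 : forall v, 0 <= hankel_form y 0 v d)
    by (intros; apply (hankel_form0_ge0 mu Hmu a_s b_s Hab Hconc y Hy)).
  destruct (max_lower_bound_exists (fun v => hankel_form y 0 v d) (fun v => hankel_form y 1 v d))
    as [am [Ham Hmax]]; auto.
  { exists a_s; exact (lower_feasible_left_end mu Hmu a_s b_s Hab Hconc y Hy d). }
  { exists b_s; exact (lower_feasible_le d). }
  destruct (max_lower_bound_exists (fun v => hankel_form y 0 v d)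
              (fun v => - hankel_form y 1 v d)) as [bm [Hbm Hmin]]; auto.
  { exists (- b_s); intros v.
    pose proof (upper_feasible_right_end mu Hmu a_s b_s Hab Hconc y Hy d v); lra. }
  { exists (- a_s); intros b Hb'; cut (a_s <= - b); [lra|].
    apply (upper_feasible_ge d); intros v; specialize (Hb' v); lra. }
  exists am, (- bm); split; [apply feasible_iff; split; auto; intros v; specialize (Hbm v); lra|].
  intros a' b' Hf; apply feasible_iff in Hf; destruct Hf as [Ha' Hb'].
  assert (a' <= am) by (apply Hmax, Ha').
  assert (- b' <= bm) by (apply Hmin; intros v; specialize (Hb' v); lra).
  lra.
Qed.

(* Weighting with (D - U)^(2n), which is largest where U vanishes, pushes the mass of
   (U - eps)(D - U)^(2n) towards the point z of the support, where U - eps < 0. *)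
Lemma supp_point_concentration z eps U : supp mu z -> 0 < eps < b_s - a_s ->
  (forall t, a_s <= t <= b_s -> 0 <= U t <= b_s - a_s) ->
  (forall t, a_s <= t <= b_s -> Rabs (t - z) <= eps / 2 -> U t <= eps / 2) ->
  exists n, forall q l, riemann_sums_cv mu a_s b_s q l ->
    (forall t, a_s <= t <= b_s -> q t = (U t - eps) * ((b_s - a_s - U t) ^ n) ^ 2) -> l < 0.
Proof.
  intros Hz He HU HUz; set (D := b_s - a_s).
  set (m := mu (fun x => (a_s <= x <= b_s) /\ z - eps / 4 < x < z + eps / 4)).
  assert (Hm : 0 < m).
  { unfold m; rewrite <- (mu_restrict mu Hmu a_s b_s Hconc) by apply borel_Ioo.
    apply supp_nbhd_pos; auto; lra. }
  set (mK := mu (fun x => a_s <= x <= b_s)); pose proof mu_hull_pos as HmK.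
  destruct (pow_dominated (D * mK) (eps / 2 * m) (D - eps) (D - eps / 2)) as [n Hn].
  { apply Rmult_lt_0_compat; lra. }
  { unfold D in *; lra. }
  exists n; intros q l Hl Hq.
  assert (Hle : l <= D * (D - eps) ^ (n * 2) * mK - eps / 2 * (D - eps / 2) ^ (n * 2) * m).
  { apply (riemann_sums_cv_bump mu Hmu a_s b_s Hab q l z (eps / 4)); auto; try lra.
    - apply Rmult_le_pos; [lra | apply pow_le; unfold D in *; lra].
    - intros t Ht; rewrite Hq; auto; apply bump_bounds; auto.
    - intros t Ht Htz; rewrite Hq; auto; apply bump_bounds; auto; apply HUz; auto; lra. }
  replace (D * (D - eps) ^ (n * 2) * mK) with (D * mK * (D - eps) ^ (n * 2)) in Hle by ring.
  replace (eps / 2 * (D - eps / 2) ^ (n * 2) * m) with (eps / 2 * m * (D - eps / 2) ^ (n * 2))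
    in Hle by ring.
  lra.
Qed.

Lemma lower_feasible_eventually_lt eps : 0 < eps ->
  exists n, forall d, (n <= d)%nat -> forall a, lower_feasible y d a -> a < a_s + eps.
Proof.
  intros He; destruct (Rle_lt_dec (b_s - a_s) 0) as [HD|HD].
  { exists 0%nat; intros d _ a Hf; pose proof (lower_feasible_le d a Hf); lra. }
  set (e := Rmin eps ((b_s - a_s) / 2)).
  assert (He' : 0 < e <= eps) by (split; [apply Rmin_pos | apply Rmin_l]; lra).
  assert (e <= (b_s - a_s) / 2) by apply Rmin_r.
  destruct (supp_point_concentration a_s e (fun t => t - a_s)) as [n Hn]; auto; try lra.
  { intros t Ht; lra. }
  { intros t Ht Htz; apply Rabs_le_inv in Htz; lra. }
  destruct (poly_eval_pow (-1) b_s n) as [v Hv]; exists n; intros d Hd a Hf.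
  assert (Hneg : 1 * hankel_form y 1 v d + - (a_s + e) * hankel_form y 0 v d < 0).
  { apply (Hn _ _ (riemann_sums_cv_affine mu Hmu a_s b_s Hab Hconc y Hy 1 (- (a_s + e)) v d)).
    intros t Ht; cbv beta; rewrite Hv by auto.
    replace (b_s - a_s - (t - a_s)) with (-1 * t + b_s) by ring; ring. }
  specialize (Hf v); pose proof (hankel_form0_ge0 mu Hmu a_s b_s Hab Hconc y Hy v d).
  destruct (Rlt_le_dec a (a_s + e)); [lra|].
  assert (0 <= (a - (a_s + e)) * hankel_form y 0 v d) by (apply Rmult_le_pos; lra); lra.
Qed.

Lemma upper_feasible_eventually_gt eps : 0 < eps ->
  exists n, forall d, (n <= d)%nat -> forall b, upper_feasible y d b -> b_s - eps < b.
Proof.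
  intros He; destruct (Rle_lt_dec (b_s - a_s) 0) as [HD|HD].
  { exists 0%nat; intros d _ b Hf; pose proof (upper_feasible_ge d b Hf); lra. }
  set (e := Rmin eps ((b_s - a_s) / 2)).
  assert (He' : 0 < e <= eps) by (split; [apply Rmin_pos | apply Rmin_l]; lra).
  assert (e <= (b_s - a_s) / 2) by apply Rmin_r.
  destruct (supp_point_concentration b_s e (fun t => b_s - t)) as [n Hn]; auto; try lra.
  { intros t Ht; lra. }
  { intros t Ht Htz; apply Rabs_le_inv in Htz; lra. }
  destruct (poly_eval_pow 1 (- a_s) n) as [v Hv]; exists n; intros d Hd b Hf.
  assert (Hneg : -1 * hankel_form y 1 v d + (b_s - e) * hankel_form y 0 v d < 0).
  { apply (Hn _ _ (riemann_sums_cv_affine mu Hmu a_s b_s Hab Hconc y Hy (-1) (b_s - e) v d)).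
    intros t Ht; cbv beta; rewrite Hv by auto.
    replace (b_s - a_s - (b_s - t)) with (1 * t + - a_s) by ring; ring. }
  specialize (Hf v); pose proof (hankel_form0_ge0 mu Hmu a_s b_s Hab Hconc y Hy v d).
  destruct (Rlt_le_dec (b_s - e) b); [lra|].
  assert (0 <= (b_s - e - b) * hankel_form y 0 v d) by (apply Rmult_le_pos; lra); lra.
Qed.

Lemma optimal_cv (A B : nat -> R) : (forall d, optimal y d (A d) (B d)) ->
  Un_cv A a_s /\ Un_cv B b_s.
Proof.
  intros Hopt.
  assert (Hf : forall d, lower_feasible y d (A d) /\ upper_feasible y d (B d))
    by (intros d; apply feasible_iff, Hopt).
  assert (HA : forall d, a_s <= A d).
  { intros d; assert (B d - A d <= B d - a_s); [|lra].
    apply (proj2 (Hopt d)), feasible_iff; split; [|apply Hf].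
    exact (lower_feasible_left_end mu Hmu a_s b_s Hab Hconc y Hy d). }
  assert (HB : forall d, B d <= b_s).
  { intros d; assert (B d - A d <= b_s - A d); [|lra].
    apply (proj2 (Hopt d)), feasible_iff; split; [apply Hf|].
    exact (upper_feasible_right_end mu Hmu a_s b_s Hab Hconc y Hy d). }
  split.
  - apply Un_cv_of_eventually_lt; auto; intros eps He.
    destruct (lower_feasible_eventually_lt eps He) as [n Hn].
    exists n; intros d Hd; apply (Hn d Hd), Hf.
  - apply Un_cv_ext with (u := opp_seq (fun d => - B d)).
    + replace b_s with (- - b_s) by ring; apply CV_opp.
      apply Un_cv_of_eventually_lt; [intros d; specialize (HB d); lra|]; intros eps He.
      destruct (upper_feasible_eventually_gt eps He) as [n Hn].
      exists n; intros d Hd; specialize (Hn d Hd (B d) (proj2 (Hf d))); lra.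
    + intros d; unfold opp_seq; ring.
Qed.

End Extremes.

Lemma supp_extremes mu : is_finite_borel_measure mu -> mu (fun _ => True) <> 0 ->
  (exists M, forall x, supp mu x -> Rabs x <= M) ->
  exists a_s b_s, supp mu a_s /\ supp mu b_s /\ forall x, supp mu x -> a_s <= x <= b_s.
Proof.
  intros Hmu Hnz [M HM]; destruct (supp_nonempty mu Hmu Hnz) as [x0 Hx0].
  destruct (closed_bounded_has_max (supp mu)) as [b_s [Hb Hbmax]].
  - apply closed_set_supp; auto.
  - exists M; intros x Hx; apply HM, Rabs_le_inv in Hx; lra.
  - eauto.
  - destruct (closed_bounded_has_max (fun t => supp mu (- t))) as [m [Hm Hmmax]].
    + apply closed_set_opp, closed_set_supp; auto.
    + exists M; intros x Hx; apply HM in Hx; rewrite Rabs_Ropp in Hx; apply Rabs_le_inv in Hx; lra.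
    + exists (- x0); rewrite Ropp_involutive; auto.
    + exists (- m), b_s; split; [|split]; auto; intros x Hx; split; auto.
      cut (- x <= m); [lra|]; apply Hmmax; rewrite Ropp_involutive; auto.
Qed.

Theorem corollary3p4 (mu : (R -> Prop) -> R) (y : nat -> R)
  (Hmu : is_finite_borel_measure mu)
  (Hnz : mu (fun _ => True) <> 0)
  (Hcpt : exists M : R, forall x, supp mu x -> Rabs x <= M)
  (Hy : is_moment_seq mu y) :
  (forall d : nat, exists a b : R, optimal y d a b) /\
  (forall A B : nat -> R, (forall d, optimal y d (A d) (B d)) ->
     exists a_s b_s : R,
       a_s <= b_s /\ Un_cv A a_s /\ Un_cv B b_s /\
       (forall x, supp mu x -> a_s <= x <= b_s) /\
       (forall c e, (forall x, supp mu x -> c <= x <= e) -> c <= a_s /\ b_s <= e) /\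
       (is_interval (supp mu) -> forall x, supp mu x <-> a_s <= x <= b_s)).
Proof.
  destruct (supp_extremes mu Hmu Hnz Hcpt) as [a_s [b_s [Ha [Hb Hsupp]]]].
  split; [exact (optimal_exists mu y Hmu Hnz Hy a_s b_s Hb Hsupp)|].
  intros A B Hopt; exists a_s, b_s.
  destruct (optimal_cv mu y Hmu Hnz Hy a_s b_s Ha Hb Hsupp A B Hopt) as [HA HB].
  split; [apply (Hsupp b_s Hb)|].
  split; [exact HA|]; split; [exact HB|]; split; [exact Hsupp|]; split.
  - intros c e Hce; split; [apply (Hce a_s Ha) | apply (Hce b_s Hb)].
  - intros Hint x; split; auto; intros Hx; apply (Hint a_s b_s x); auto.
Qed.
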